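(* Let $\{\mathbb{P}_{s,t}:0\le s\le t\}$ and $\{\mathbb{P}'_{s,t}:0\le s\le t\}$ be polynomial processes, each having the harness property (i.e. there exist $\mathbb{X},\mathbb{X}'\in\mathcal{Q}$ with $\mathbb{P}_{0,t}\mathbb{F}=(\mathbb{F}+t\mathbb{X})\mathbb{P}_{0,t}$ and $\mathbb{P}'_{0,t}\mathbb{F}=(\mathbb{F}+t\mathbb{X}')\mathbb{P}'_{0,t}$ for all $t\ge0$). If their infinitesimal generators coincide, $\mathbb{A}_t=\mathbb{A}'_t$ for all $t>0$, then $\mathbb{P}_{s,t}=\mathbb{P}'_{s,t}$ for all $0\le s\le t$. That is, a polynomial process with the harness property is uniquely determined by its generator.
   Context: $\mathcal{Q}$ denotes the real linear space of all infinite sequences $\mathbb{P}=(p_0,p_1,\dots)$ of real polynomials in $x$, with product $\mathbb{P}\mathbb{Q}=\mathbb{R}=(r_0,r_1,\dots)$, $r_k(x)=\sum_{j=0}^{\deg q_k}[q_k]_j\,p_j(x)$ for $\mathbb{Q}=(q_0,q_1,\dots)$, where $[q]_j$ is the coefficient of $x^j$ in $q$ (this corresponds to composition of linear maps of the polynomial space, a map $\mathsf{P}$ being identified with $(\mathsf{P}(1),\mathsf{P}(x),\mathsf{P}(x^2),\dots)$). Special elements: $\mathbb{E}=(1,x,x^2,\dots)$ (identity), $\mathbb{F}=(x,x^2,\dots)$, $\mathbb{D}=(0,1,x,x^2,\dots)$. A polynomial process is a family $\{\mathbb{P}_{s,t}\in\mathcal{Q}:0\le s\le t\}$ with: (i)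 the $n$-th component of $\mathbb{P}_{s,t}$ is a polynomial of degree exactly $n$ for every $n\ge0$; (ii) $\mathbb{P}_{s,t}(\mathbb{E}-\mathbb{F}\mathbb{D})=\mathbb{E}-\mathbb{F}\mathbb{D}$; (iii) $\mathbb{P}_{s,t}\mathbb{P}_{t,u}=\mathbb{P}_{s,u}$ for $0\le s\le t\le u$. Its infinitesimal generator is $\mathbb{A}_t=\lim_{h\to0^+}\frac1h(\mathbb{P}_{t-h,t}-\mathbb{E})$, $t>0$, limit taken coefficientwise (it exists under the harness property). *)

From HB Require Import structures.
From mathcomp Require Import all_boot all_order all_algebra.
From mathcomp Require Import all_classical all_reals all_analysis.
Set Implicit Arguments. Unset Strict Implicit. Unset Printing Implicit Defensive.
Import Order.TTheory GRing.Theory Num.Theory.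
Local Open Scope classical_set_scope.
Local Open Scope ring_scope.

Section Q.
Variable R : realType.

Definition Qseq := nat -> {poly R}.

(* Product: (P Q)_k = sum_j [q_k]_j p_j  (composition of linear maps). *)
Definition qmul (P Q : Qseq) : Qseq :=
  fun k => \sum_(j < size (Q k)) (Q k)`_j *: P j.

Definition qadd (P Q : Qseq) : Qseq := fun k => P k + Q k.
Definition qsub (P Q : Qseq) : Qseq := fun k => P k - Q k.
Definition qscale (c : R) (P : Qseq) : Qseq := fun k => c *: P k.

Definition qE : Qseq := fun n => 'X^n.
Definition qF : Qseq := fun n => 'X^(n.+1).
Definition qD : Qseq := fun n => if n is m.+1 then 'X^m else 0.

Definition polynomial_process (P : R -> R -> Qseq) : Prop :=
  (forall s t n, 0 <= s -> s <= t -> size (P s t n) = n.+1) /\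
  (forall s t, 0 <= s -> s <= t ->
     qmul (P s t) (qsub qE (qmul qF qD)) = qsub qE (qmul qF qD)) /\
  (forall s t u, 0 <= s -> s <= t -> t <= u ->
     qmul (P s t) (P t u) = P s u).

Definition harness (P : R -> R -> Qseq) : Prop :=
  exists X : Qseq, forall t, 0 <= t ->
    qmul (P 0 t) qF = qmul (qadd qF (qscale t X)) (P 0 t).

Definition is_generator (P : R -> R -> Qseq) (A : R -> Qseq) : Prop :=
  forall t, 0 < t -> forall n j : nat,
    (fun h : R => h^-1 * ((P (t - h) t n)`_j - (qE n)`_j))
      @ (0 : R)^'+ --> (A t n)`_j.

End Q.

From HB Require Import structures.
From mathcomp Require Import all_boot all_order all_algebra.
From mathcomp Require Import all_classical all_reals all_analysis.
From mathcomp Require Import ring.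
Import Order.TTheory GRing.Theory Num.Theory.
Set Implicit Arguments. Unset Strict Implicit. Unset Printing Implicit Defensive.
Local Open Scope ring_scope.

(* The harness property [P_{0,t} F = (F + t X) P_{0,t}] computes the n-th
   component of [P_{0,t}] from the (n-1)-th, so every coefficient of [P_{0,t}]
   is a polynomial [Q n c] in [t], and [P_{0,0} = E].  Writing
   [P_{0,t} = P_{0,t-h} P_{t-h,t}] and letting [h -> 0+] gives the forward
   equation [d/dt P_{0,t} = P_{0,t} A_t], a lower-triangular linear system for
   the [Q n c].  By induction on [n], uniqueness reduces to the scalar equation
   [d' = a_{nn} d]; as [g = Q n n] solves it with [g(0) = 1], the polynomial
   identity [d' g = d g'] together with [d(0) = 0] forces [d = 0].  Thus
   [P_{0,t}] is determined by the generator, and then so is [P_{s,t}], since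
   [P_{0,t} = P_{0,s} P_{s,t}] and the components of [P_{0,s}] have distinct
   degrees. *)

Section PolynomialProcess.
Variable R : realType.
Implicit Types (Y X : Qseq R) (P : R -> R -> Qseq R).

Lemma sum_coefXn (V : lmodType R) n (f : nat -> V) :
  \sum_(j < n.+1) ('X^n : {poly R})`_j *: f j = f n.
Proof.
rewrite big_ord_recr /= big1 ?add0r; first by rewrite coefXn eqxx scale1r.
by move=> i _; rewrite coefXn ltn_eqF //= scale0r.
Qed.

Lemma qmulF Y n : qmul Y (qF R) n = Y n.+1.
Proof. by rewrite /qmul /qF size_polyXn sum_coefXn. Qed.

Lemma process_component0 P s t :
  polynomial_process P -> 0 <= s -> s <= t -> P s t 0%N = 1.
Proof.
move=> [_ [PEFD _]] s0 st; have := congr1 (fun Y => Y 0%N) (PEFD s t s0 st).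
rewrite /qmul /qsub /qE /qD size_poly0 big_ord0 expr0 subr0 size_poly1.
by rewrite big_ord1 coefC scale1r.
Qed.

Lemma harness_step P X t n : polynomial_process P -> 0 <= t ->
  qmul (P 0 t) (qF R) = qmul (qadd (qF R) (qscale t X)) (P 0 t) ->
  P 0 t n.+1 = \sum_(j < n.+1) (P 0 t n)`_j *: ('X^(j.+1) + t *: X j).
Proof.
move=> [Psize _] t0 /(congr1 (fun Y => Y n)); rewrite qmulF => ->.
by rewrite /qmul Psize.
Qed.

Lemma harness_start P n : polynomial_process P -> harness P -> P 0 0 n = 'X^n.
Proof.
move=> PP [X HX]; elim: n => [|n IHn]; first by rewrite process_component0.
rewrite (harness_step n PP (lexx 0) (HX 0 (lexx 0))) IHn.
by rewrite (sum_coefXn n (fun j => 'X^(j.+1) + 0 *: X j)) scale0r addr0.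
Qed.

Lemma harness_coef_poly P : polynomial_process P -> harness P ->
  exists Q : nat -> nat -> {poly R},
    forall n c t, 0 <= t -> (P 0 t n)`_c = (Q n c).[t].
Proof.
move=> PP [X HX].
suff /choice[Q HQ] : forall n, exists Qn : nat -> {poly R},
    forall c t, 0 <= t -> (P 0 t n)`_c = (Qn c).[t] by exists Q.
elim=> [|n [Qn HQn]].
  by exists (fun c => (c == 0)%:R%:P) => c t t0; rewrite process_component0 ?coef1 ?hornerC.
exists (fun c => \sum_(j < n.+1) Qn j * ((('X^(j.+1))`_c)%:P + 'X * ((X j)`_c)%:P)).
move=> c t t0; rewrite (harness_step n PP t0 (HX t t0)) coef_sum horner_sum.
apply: eq_bigr => j _.
by rewrite coefZ coefD coefZ HQn // hornerM hornerD hornerM hornerX !hornerC.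
Qed.

End PolynomialProcess.

Section LeftLimits.
Variable R : realType.
Local Open Scope classical_set_scope.

Lemma cvg_horner_left (q : {poly R}) t : q.[t - h] @[h --> 0^'+] --> q.[t].
Proof.
have shift h : q.[t - h] = (q \Po (t%:P - 'X)).[h].
  by rewrite horner_comp !hornerE.
have -> : q.[t] = (q \Po (t%:P - 'X)).[0] by rewrite -shift subr0.
rewrite (funext shift); apply: cvg_at_right_filter; exact: continuous_horner.
Qed.

Lemma cvg_left_difference_quotient (q : {poly R}) t :
  h^-1 * (q.[t] - q.[t - h]) @[h --> 0^'+] --> q^`().[t].
Proof.
set r := q.[t]%:P - (q \Po (t%:P - 'X)).
have rE h : r.[h] = q.[t] - q.[t - h].
  by rewrite /r hornerD hornerN hornerC horner_comp !hornerE.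
have /factor_theorem[s rsX] : root r 0 by rewrite /root rE subr0 subrr.
have s0 : s.[0] = q^`().[t].
  have : r^`().[0] = q^`().[t].
    rewrite /r derivB derivC sub0r deriv_comp derivB derivC derivX sub0r.
    by rewrite mulrN1 opprK horner_comp !hornerE subr0.
  by rewrite rsX derivM derivB derivC derivX subr0 !hornerE subr0 mulr1.
have quotient_s : {near 0^'+, (fun h => s.[h]) =1 (fun h => h^-1 * r.[h])}.
  near=> h; have h0 : h != 0 by rewrite gt_eqF //; near: h; exact: nbhs_right_gt.
  by rewrite rsX hornerM !hornerE subr0 /= mulrAC mulVf ?mul1r.
under eq_fun do rewrite -rE; rewrite -s0.
apply: cvg_trans (near_eq_cvg quotient_s) _.
apply: cvg_at_right_filter; exact: continuous_horner.
Unshelve. all: by end_near.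
Qed.

End LeftLimits.

Section ForwardEquation.
Variable R : realType.
Local Open Scope classical_set_scope.

(* The Kolmogorov forward equation [d/dt P_{0,t} = P_{0,t} A_t] for the
   coefficients [(P_{0,t} n)_c = (Q n c).[t]], with [a t n j = (A_t n)_j]. *)
Definition forward_equation (a : R -> nat -> nat -> R) (Q : nat -> nat -> {poly R}) :=
  forall t, 0 < t -> forall n c,
    (Q n c)^`().[t] = \sum_(j < n.+1) a t n j * (Q j c).[t].

Lemma process_forward_equation P A (Q : nat -> nat -> {poly R}) :
  polynomial_process P -> is_generator P A ->
  (forall n c t, 0 <= t -> (P 0 t n)`_c = (Q n c).[t]) ->
  forward_equation (fun t n j => (A t n)`_j) Q.
Proof.
move=> [Psize [_ Pcomp]] PA PQ t t0 n c.
pose f h := h^-1 * ((P 0 t n)`_c - (P 0 (t - h) n)`_c).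
have near_t (g : R -> R) : (forall h, 0 < h -> 0 <= t - h -> g h = f h) ->
    {near 0^'+, g =1 f}.
  move=> gf; near=> h; apply: gf; first by near: h; exact: nbhs_right_gt.
  by rewrite subr_ge0 ltW //; near: h; exact: nbhs_right_lt.
have f_deriv : f @ 0^'+ --> (Q n c)^`().[t].
  have : {near 0^'+, (fun h => h^-1 * ((Q n c).[t] - (Q n c).[t - h])) =1 f}.
    by apply: near_t => h h0 th; rewrite /f !PQ // ltW.
  by move/near_eq_cvg/cvg_trans; apply; exact: cvg_left_difference_quotient.
have f_generator : f @ 0^'+ --> \sum_(j < n.+1) (A t n)`_j * (Q j c).[t].
  pose g h := \sum_(j < n.+1)
    (h^-1 * ((P (t - h) t n)`_j - (qE R n)`_j)) * (Q j c).[t - h].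
  have : {near 0^'+, g =1 f}.
    apply: near_t => h h0 th; have ht : t - h <= t by rewrite gerBl ltW.
    rewrite /f -(Pcomp 0 (t - h) t) ?lexx // /qmul Psize // coef_sum.
    rewrite -[X in _ - X](sum_coefXn (V := R^o) n (fun j => (P 0 (t - h) j)`_c)).
    rewrite -sumrB mulr_sumr; apply: eq_bigr => j _.
    by rewrite coefZ /= -mulrBl mulrA PQ.
  move/near_eq_cvg/cvg_trans; apply.
  apply: cvg_big => [|j _]; first exact: add_continuous.
  by apply: cvgM; [exact: PA | exact: cvg_horner_left].
exact: (cvg_unique (@Rhausdorff R) f_deriv f_generator).
Unshelve. all: by end_near.
Qed.

End ForwardEquation.

Section Uniqueness.
Variable R : realType.

Lemma poly_eq0_on_pos (p : {poly R}) : (forall t, 0 < t -> p.[t] = 0) -> p = 0.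
Proof.
move=> p0; apply: (@roots_geq_poly_eq0 _ p [seq i.+1%:R | i <- iota 0 (size p)]).
- by apply/allP => _ /mapP[i _ ->]; apply/rootP/p0/ltr0Sn.
- by rewrite map_inj_uniq ?iota_uniq // => i j /eqP; rewrite eqr_nat => /eqP[].
- by rewrite size_map size_iota.
Qed.

(* Once [d_0 = ... = d_n = 0], the coefficient of degree [n] of [d' g - d g']
   is [(n + 1) d_{n+1} g_0]. *)
Lemma wronskian0_root0_eq0 (d g : {poly R}) :
  d^`() * g = d * g^`() -> d.[0] = 0 -> g.[0] != 0 -> d = 0.
Proof.
rewrite !horner_coef0 => dg d0 g0.
suff coef_d n : forall i, (i <= n)%N -> d`_i = 0.
  by apply/polyP => n; rewrite coef0 (coef_d n).
elim: n => [|n IHn] i; first by rewrite leqn0 => /eqP ->.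
rewrite leq_eqVlt ltnS => /predU1P[-> | /IHn //].
have := congr1 (fun p : {poly R} => p`_n) dg; rewrite !coefM.
rewrite big_ord_recr /= big1 => [|j _]; last by rewrite coef_deriv IHn ?mul0rn ?mul0r.
rewrite big1 => [|j _]; last by rewrite IHn ?mul0r // -ltnS.
rewrite add0r subnn coef_deriv => /esym/eqP; rewrite eq_sym mulf_eq0 mulrn_eq0.
by rewrite (negPf g0) orbF => /eqP.
Qed.

Lemma forward_equation_unique a (Q Q' : nat -> nat -> {poly R}) :
  forward_equation a Q -> forward_equation a Q' ->
  (forall n c, (Q n c).[0] = (Q' n c).[0]) ->
  (forall n, (Q n n).[0] != 0) ->
  (forall n c t, 0 < t -> (n < c)%N -> (Q n c).[t] = 0) ->
  forall n c, Q n c = Q' n c.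
Proof.
move=> FQ FQ' Q0 Qnn0 Qtriangular; elim/ltn_ind=> n IHn c.
apply/eqP; rewrite -subr_eq0; apply/eqP.
apply: (@wronskian0_root0_eq0 _ (Q n n)); last by [].
- apply/eqP; rewrite -subr_eq0; apply/eqP/poly_eq0_on_pos => t t0.
  have diag_d : (Q n c - Q' n c)^`().[t] = a t n n * (Q n c - Q' n c).[t].
    rewrite derivB !hornerE FQ // FQ' // !big_ord_recr /=.
    under [X in _ + _ - (X + _)]eq_bigr do rewrite -IHn //.
    ring.
  have diag_g : (Q n n)^`().[t] = a t n n * (Q n n).[t].
    rewrite FQ // big_ord_recr /= big1 ?add0r // => j _.
    by rewrite Qtriangular ?mulr0.
  by rewrite hornerD hornerN !hornerM diag_d diag_g; ring.
- by rewrite hornerD hornerN Q0 subrr.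
Qed.

Lemma comb_triangular_eq0 (Y : Qseq R) N (r : nat -> R) :
  (forall j, size (Y j) = j.+1) ->
  \sum_(j < N) r j *: Y j = 0 -> forall j, (j < N)%N -> r j = 0.
Proof.
move=> Ysize; elim: N => [|N IHN] // /[!big_ord_recr] /= comb0 j.
have YNN : (Y N)`_N != 0.
  by rewrite -{2}[N]/(N.+1.-1) -Ysize -lead_coefE lead_coef_eq0 -size_poly_eq0 Ysize.
have rN : r N = 0.
  have /eqP := congr1 (fun p : {poly R} => p`_N) comb0.
  rewrite coef0 coefD coef_sum big1 => [|i _]; last first.
    by rewrite coefZ nth_default ?mulr0 // Ysize.
  by rewrite add0r coefZ mulf_eq0 (negPf YNN) orbF => /eqP.
rewrite ltnS leq_eqVlt => /predU1P[-> // | ]; apply: IHN.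
by rewrite rN scale0r addr0 in comb0.
Qed.

Lemma sum_coef_widen (Y : Qseq R) (p : {poly R}) N : (size p <= N)%N ->
  \sum_(j < N) p`_j *: Y j = \sum_(j < size p) p`_j *: Y j.
Proof.
move=> pN; rewrite -(subnKC pN) big_split_ord /= [X in _ + X]big1 ?addr0 // => j _.
by rewrite nth_default ?scale0r ?leq_addr.
Qed.

Lemma qmul_triangular_inj (Y : Qseq R) (p q : {poly R}) :
  (forall j, size (Y j) = j.+1) ->
  \sum_(j < size p) p`_j *: Y j = \sum_(j < size q) q`_j *: Y j -> p = q.
Proof.
move=> Ysize pq; set N := maxn (size p) (size q).
have comb0 : \sum_(j < N) (p`_j - q`_j) *: Y j = 0.
  under eq_bigr do rewrite scalerBl.
  by rewrite sumrB !sum_coef_widen ?leq_maxl ?leq_maxr // pq subrr.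
apply/polyP => j; have [jN | Nj] := ltnP j N.
  by apply/eqP; rewrite -subr_eq0; apply/eqP; exact: (comb_triangular_eq0 (r := fun j => p`_j - q`_j) Ysize comb0 jN).
by rewrite !nth_default // (leq_trans _ Nj) ?leq_maxl ?leq_maxr.
Qed.

Lemma process_eq_from_start (P P' : R -> R -> Qseq R) s t :
  polynomial_process P -> polynomial_process P' ->
  (forall u, 0 <= u -> P 0 u = P' 0 u) ->
  0 <= s -> s <= t -> P s t = P' s t.
Proof.
move=> [Psize [_ Pcomp]] [_ [_ P'comp]] PP' s0 st; apply: funext => n.
have := congr1 (fun Y => Y n) (Pcomp 0 s t (lexx 0) s0 st).
have := congr1 (fun Y => Y n) (P'comp 0 s t (lexx 0) s0 st).
rewrite /qmul -PP' // -PP' ?(le_trans s0 st) // => <- comp.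
apply: (qmul_triangular_inj (Y := P 0 s)); last by rewrite comp.
by move=> j; rewrite Psize.
Qed.

End Uniqueness.

Theorem proposition2p3 (R : realType) (P P' : R -> R -> Qseq R) (A : R -> Qseq R) :
  polynomial_process P -> polynomial_process P' ->
  harness P -> harness P' ->
  is_generator P A -> is_generator P' A ->
  forall s t : R, 0 <= s -> s <= t -> P s t = P' s t.
Proof.
move=> PP PP' HP HP' PA P'A.
have [Q PQ] := harness_coef_poly PP HP.
have [Q' P'Q'] := harness_coef_poly PP' HP'.
have Q0 n c : (Q n c).[0] = ('X^n)`_c by rewrite -PQ // harness_start.
have Q'0 n c : (Q' n c).[0] = ('X^n)`_c by rewrite -P'Q' // harness_start.
have QQ' : forall n c, Q n c = Q' n c.
  apply: (forward_equation_unique (process_forward_equation PP PA PQ)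
                                  (process_forward_equation PP' P'A P'Q')).
  - by move=> n c; rewrite Q0 Q'0.
  - by move=> n; rewrite Q0 coefXn eqxx oner_neq0.
  - move=> n c t t0 nc; rewrite -PQ ?ltW // nth_default //.
    by case: PP => Psize _; rewrite Psize // ltW.
move=> s t; apply: process_eq_from_start => // u u0.
by apply: funext => n; apply/polyP => c; rewrite PQ // P'Q' // QQ'.
Qed.
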